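(* Let $S$ be an abelian group and let $\{G_j\}_{j\in J}$ be the family of all proper subgroups of $S$. Then for every left $S$-act $A$, the geometric equivalence class $[A]=\{B: B\overset{\triangle}{\sim}A\}$ has a representation of exactly one of the following three types: (i) $[A]=\big[\coprod_{k\in K}\overline{G_k}\big]$ for some $K\subseteq J$; (ii) $[A]=\big[\coprod_{k\in K}\overline{G_k}\amalg z\big]$ for some $K\subseteq J$; (iii) $[A]=\big[\coprod_{k\in K}\overline{G_k}\amalg z_1\amalg z_2\big]$ for some $K\subseteq J$. (That is, $A$ is geometrically equivalent to an $S$-act of one of these forms, and $[A]$ does not admit representations of two different types.)
   Context: For a monoid $S$, a left $S$-act is a nonempty set $A$ with a map $S\times A\to A$, $(s,a)\mapsto sa$, such that $1a=a$ and $(st)a=s(ta)$; homomorphisms are maps $f$ with $f(sa)=sf(a)$. Coproducts $\amalg$ of $S$-acts are disjoint unions with the induced action. For a nonempty finite set $X$, $F_X=\coprod_{x\in X}S_x$ is the free $S$-act on $X$ (a disjoint union of copies of the left regular act ${}_SS$). For an $S$-act $G$ and a relation $T\subseteq F_X\times F_X$, let $T'_G=\{\mu:F_X\to G \text{ homomorphism}: T\subseteq\ker\mu\}$ and $T''_G=\bigcap_{\mu\in T'_G}\ker\mu$ (empty intersection $=F_X\times F_X$). $G_1\overset{\triangle}{\sim}G_2$ (geometric equivalence) iff $T''_{G_1}=T''_{G_2}$ for every nonempty finite $X$ and every $T\subseteq F_X\times F_X$. For a subgroup $H$ of $S$, $\overline{H}=S/H$ is the $S$-act of cosets $tH$ with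 $s\cdot tH=stH$. The symbols $z,z_1,z_2$ denote one-element $S$-acts. *)

From Stdlib Require Import FunctionalExtensionality PropExtensionality ProofIrrelevance.
From mathcomp Require Import all_boot.

Set Implicit Arguments.
Unset Strict Implicit.
Unset Printing Implicit Defensive.

Record monoid := Monoid {
  mcar :> Type;
  mmul : mcar -> mcar -> mcar;
  mone : mcar;
  mmulA : forall x y z, mmul x (mmul y z) = mmul (mmul x y) z;
  mmul1 : forall x, mmul mone x = x;
  mmulr1 : forall x, mmul x mone = x }.

Arguments mmul {m}.
Arguments mone {m}.

Definition is_group (S : monoid) : Prop :=
  forall x : S, exists y : S, mmul x y = mone /\ mmul y x = mone.
Definition is_commutative (S : monoid) : Prop :=
  forall x y : S, mmul x y = mmul y x.

Definition is_subgroup (S : monoid) (H : S -> Prop) : Prop :=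
  [/\ H mone,
      (forall x y, H x -> H y -> H (mmul x y)) &
      (forall x y, H x -> mmul x y = mone -> H y)].
Definition is_proper_subgroup (S : monoid) (H : S -> Prop) : Prop :=
  is_subgroup H /\ exists s, ~ H s.

(* Left S-acts (data + action axioms).  Nonemptiness of the carrier is
   stated separately (predicate [nonempty_act]). *)
Record sact (S : monoid) := SAct {
  acar :> Type;
  aop : S -> acar -> acar;
  aop1 : forall a, aop mone a = a;
  aopM : forall s t a, aop (mmul s t) a = aop s (aop t a) }.

Arguments aop {S} _ _ _.

Definition nonempty_act (S : monoid) (A : sact S) : Prop := inhabited A.

(* Homomorphisms F_X -> B, where F_X = X x S with s.(x,t) = (x, s t)
   is the free S-act on X (disjoint union of copies of _S S). *)
Definition is_hom_free (S : monoid) (X : Type) (B : sact S) (mu : X * S -> B) : Prop :=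
  forall (x : X) (s t : S), mu (x, mmul s t) = aop B s (mu (x, t)).

(* T''_B = intersection of ker mu over all homs mu : F_X -> B with T <= ker mu. *)
Definition Tclos (S : monoid) (X : Type) (B : sact S)
    (T : X * S -> X * S -> Prop) (p q : X * S) : Prop :=
  forall mu : X * S -> B, is_hom_free mu ->
    (forall a b, T a b -> mu a = mu b) -> mu p = mu q.

Definition geom_equiv (S : monoid) (A B : sact S) : Prop :=
  forall (X : finType), (0 < #|X|)%N ->
  forall (T : X * S -> X * S -> Prop) (p q : X * S),
    Tclos A T p q <-> Tclos B T p q.

Definition lcoset (S : monoid) (H : S -> Prop) (t : S) : S -> Prop :=
  fun u => exists h, H h /\ u = mmul t h.

Definition coset_car (S : monoid) (H : S -> Prop) : Type :=
  { C : S -> Prop | exists t, C = lcoset H t }.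

Definition pred_act (S : monoid) (s : S) (C : S -> Prop) : S -> Prop :=
  fun u => exists v, C v /\ u = mmul s v.

Lemma pred_act_lcoset (S : monoid) (H : S -> Prop) (s t : S) :
  pred_act s (lcoset H t) = lcoset H (mmul s t).
Proof.
apply: functional_extensionality => u; apply: propositional_extensionality.
split.
- move=> [v [[h [Hh ->]] ->]]; exists h; split => //; by rewrite mmulA.
- move=> [h [Hh ->]]; exists (mmul t h); split; first by exists h.
  by rewrite mmulA.
Qed.

Lemma pred_act_coset (S : monoid) (H : S -> Prop) (s : S) (C : S -> Prop) :
  (exists t, C = lcoset H t) -> exists t, pred_act s C = lcoset H t.
Proof. move=> [t ->]; exists (mmul s t); exact: pred_act_lcoset. Qed.

Definition coset_op (S : monoid) (H : S -> Prop) (s : S) (c : coset_car H) :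
  coset_car H :=
  exist _ (pred_act s (proj1_sig c)) (pred_act_coset s (proj2_sig c)).

Lemma coset_op1 (S : monoid) (H : S -> Prop) (c : coset_car H) :
  coset_op mone c = c.
Proof.
case: c => C pC; apply: subset_eq_compat => /=.
apply: functional_extensionality => u; apply: propositional_extensionality.
split; first by move=> [v [Cv ->]]; rewrite mmul1.
by move=> Cu; exists u; rewrite mmul1.
Qed.

Lemma coset_opM (S : monoid) (H : S -> Prop) (s t : S) (c : coset_car H) :
  coset_op (mmul s t) c = coset_op s (coset_op t c).
Proof.
case: c => C pC; apply: subset_eq_compat => /=.
apply: functional_extensionality => u; apply: propositional_extensionality.
split.
- move=> [v [Cv ->]]; exists (mmul t v); split; first by exists v.
  by rewrite mmulA.
- move=> [w [[v [Cv ->]] ->]]; exists v; split => //; by rewrite mmulA.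
Qed.

Definition coset_act (S : monoid) (H : S -> Prop) : sact S :=
  SAct (@coset_op1 S H) (@coset_opM S H).

Section Coprod.
Variables (S : monoid) (I : Type) (F : I -> sact S).

Definition coprod_op (s : S) (a : {i : I & F i}) : {i : I & F i} :=
  existT _ (projT1 a) (aop (F (projT1 a)) s (projT2 a)).

Lemma coprod_op1 a : coprod_op mone a = a.
Proof. by case: a => i x; rewrite /coprod_op /= aop1. Qed.

Lemma coprod_opM s t a : coprod_op (mmul s t) a = coprod_op s (coprod_op t a).
Proof. by case: a => i x; rewrite /coprod_op /= aopM. Qed.

Definition coprod_act : sact S := SAct coprod_op1 coprod_opM.
End Coprod.

Section Sum.
Variables (S : monoid) (A B : sact S).

Definition sum_op (s : S) (x : A + B) : A + B :=
  match x with inl a => inl (aop A s a) | inr b => inr (aop B s b) end.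

Lemma sum_op1 x : sum_op mone x = x.
Proof. by case: x => a /=; rewrite aop1. Qed.

Lemma sum_opM s t x : sum_op (mmul s t) x = sum_op s (sum_op t x).
Proof. by case: x => a /=; rewrite aopM. Qed.

Definition sum_act : sact S := SAct sum_op1 sum_opM.
End Sum.

Definition one_act (S : monoid) : sact S :=
  @SAct S unit (fun _ u => u) (fun _ => erefl) (fun _ _ _ => erefl).

Definition cosets_coprod (S : monoid) (K : (S -> Prop) -> Prop) : sact S :=
  @coprod_act S {H : S -> Prop | K H} (fun i => coset_act (proj1_sig i)).

Definition subset_proper (S : monoid) (K : (S -> Prop) -> Prop) : Prop :=
  forall H, K H -> is_proper_subgroup H.

Definition rep_type1 (S : monoid) (A : sact S) : Prop :=
  exists K, [/\ subset_proper K, (exists H, K H) &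
                geom_equiv A (cosets_coprod K)].
Definition rep_type2 (S : monoid) (A : sact S) : Prop :=
  exists K, subset_proper K /\
            geom_equiv A (sum_act (cosets_coprod K) (one_act S)).
Definition rep_type3 (S : monoid) (A : sact S) : Prop :=
  exists K, subset_proper K /\
            geom_equiv A (sum_act (cosets_coprod K)
                                  (sum_act (one_act S) (one_act S))).

(* Over an abelian group S every S-act is the disjoint union of its orbits, the
   orbit of a point b being isomorphic to S/Stab(b), and Stab(b) is proper
   exactly when b is not fixed.  Two acts are geometrically equivalent as soon
   as the points of each are separated by homomorphisms into the other.  So A
   is equivalent to the coproduct of the S/Stab(b) over its non-fixed points b
   (each proper stabilizer counted once), together with one copy of z if A has
   exactly one fixed point and two copies if it has at least two: the
   coproduct embeds into A, and A maps onto it orbit by orbit.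
   The three types are told apart by two properties that are visible to the
   closure operators T'' and hence invariant under geometric equivalence:
   "there is at most one fixed point", and "if there is a fixed point, then s
   acts trivially". *)

From mathcomp Require Import all_boot.
From Stdlib Require Import Classical ClassicalEpsilon FunctionalExtensionality
  PropExtensionality ProofIrrelevance.

Set Implicit Arguments.
Unset Strict Implicit.
Unset Printing Implicit Defensive.

Section SActs.
Variable S : monoid.
Implicit Types (A B : sact S) (s t : S).

Definition fixedp A (b : A) : Prop := forall s, aop A s b = b.
Definition stab A (b : A) : S -> Prop := fun s => aop A s b = b.
Definition orbit A (b c : A) : Prop := exists t, aop A t c = b.
Definition is_hom A B (f : A -> B) : Prop :=
  forall s a, f (aop A s a) = aop B s (f a).
Definition separates A B : Prop :=
  forall a a' : A, a <> a' -> exists f : A -> B, is_hom f /\ f a <> f a'.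

Lemma injective_hom_separates A B (f : A -> B) :
  is_hom f -> injective f -> separates A B.
Proof. by move=> hf inj_f a a' ne; exists f; split => // /inj_f. Qed.

Lemma injective_hom_fixedP A B (f : A -> B) (a : A) :
  is_hom f -> injective f -> fixedp (f a) <-> fixedp a.
Proof.
move=> hf inj_f; split=> fa s; last by rewrite -hf fa.
by apply: inj_f; rewrite hf fa.
Qed.

Lemma hom_free_eval X B (mu : X * S -> B) x t :
  is_hom_free mu -> mu (x, t) = aop B t (mu (x, mone)).
Proof. by move=> hmu; rewrite -hmu mmulr1. Qed.

Definition free_ext X B (b : X -> B) : X * S -> B := fun p => aop B p.2 (b p.1).

Lemma free_ext_hom X B (b : X -> B) : is_hom_free (free_ext b).
Proof. by move=> x s t; rewrite /free_ext /= aopM. Qed.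

Lemma free_ext_one X B (b : X -> B) x : free_ext b (x, mone) = b x.
Proof. exact: aop1. Qed.

Lemma separates_Tclos A B X T (p q : X * S) :
  separates A B -> Tclos B T p q -> Tclos A T p q.
Proof.
move=> sepAB hB mu hmu hT; apply: NNPP => /sepAB [f [hf]]; apply.
apply: (hB (fun z => f (mu z))) => [x s t | a b /hT -> //].
by rewrite hmu hf.
Qed.

Lemma separates_geom_equiv A B :
  separates A B -> separates B A -> geom_equiv A B.
Proof. by move=> sAB sBA X _ T p q; split; apply: separates_Tclos. Qed.

Definition acts_trivially A s : Prop := forall b : A, aop A s b = b.
Definition fixed_point_unique A : Prop :=
  forall e e' : A, fixedp e -> fixedp e' -> e = e'.
Definition fixed_point_trivializes A s : Prop :=
  (exists e : A, fixedp e) -> acts_trivially A s.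

Lemma Tclos_acts_trivially B s :
  Tclos B (fun _ _ : unit * S => False) (tt, mone) (tt, s) <-> acts_trivially B s.
Proof.
split=> [hB b | hB mu hmu _]; last by rewrite (hom_free_eval tt s hmu) hB.
have := hB _ (free_ext_hom (fun _ => b)) (fun _ _ => False_ind _).
by rewrite free_ext_one.
Qed.

(* [T] forces the image of each generator [(x, 1)] to be a fixed point. *)
Lemma Tclos_fixed_point_unique B :
  Tclos B (fun p q : bool * S => p.1 = q.1 /\ p.2 = mone)
    (false, mone) (true, mone)
  <-> fixed_point_unique B.
Proof.
split=> [hB e e' fe fe' | hB mu hmu hT].
  have := hB _ (free_ext_hom (fun x : bool => if x then e' else e)).
  rewrite !free_ext_one; apply=> -[x u] [y v] /= [<- ->].
  by rewrite free_ext_one /free_ext; case: x.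
by apply: hB => s; rewrite -hom_free_eval //; symmetry; apply: hT.
Qed.

(* [T] forces the image of [(false, 1)] to be a fixed point. *)
Lemma Tclos_fixed_point_trivializes B s :
  Tclos B (fun p q : bool * S => [/\ p.1 = false, q.1 = false & p.2 = mone])
    (true, mone) (true, s)
  <-> fixed_point_trivializes B s.
Proof.
split=> [hB [e fe] b | hB mu hmu hT].
  have := hB _ (free_ext_hom (fun x : bool => if x then b else e)).
  rewrite !free_ext_one /free_ext /= => h; symmetry; apply: h.
  by move=> [x u] [y v] /= [-> -> ->]; rewrite aop1 fe.
rewrite (hom_free_eval true s hmu) hB //.
by exists (mu (false, mone)) => t; rewrite -hom_free_eval //; symmetry; apply: hT.
Qed.

Lemma geom_equiv_acts_trivially A B s :
  geom_equiv A B -> acts_trivially A s <-> acts_trivially B s.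
Proof.
by move=> eAB; rewrite -!Tclos_acts_trivially; apply: eAB; rewrite card_unit.
Qed.

Lemma geom_equiv_fixed_point_unique A B :
  geom_equiv A B -> fixed_point_unique A <-> fixed_point_unique B.
Proof.
by move=> eAB; rewrite -!Tclos_fixed_point_unique; apply: eAB; rewrite card_bool.
Qed.

Lemma geom_equiv_fixed_point_trivializes A B s :
  geom_equiv A B -> fixed_point_trivializes A s <-> fixed_point_trivializes B s.
Proof.
move=> eAB; rewrite -!Tclos_fixed_point_trivializes.
by apply: eAB; rewrite card_bool.
Qed.

Lemma sum_fixed_inl A B (x : A) : fixedp (inl x : sum_act A B) -> fixedp x.
Proof. by move=> fx s; case: (fx s). Qed.

Lemma coprod_fixedP I (F : I -> sact S) i (x : F i) :
  fixedp (existT _ i x : coprod_act F) <-> fixedp x.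
Proof.
split=> fx s; last by rewrite /= /coprod_op /= fx.
exact: inj_pair2 (fx s).
Qed.

Definition sum_map A B (C : sact S) (f : A -> C) (g : B -> C)
    (x : sum_act A B) : C :=
  match x with inl a => f a | inr b => g b end.

Lemma sum_map_hom A B (C : sact S) (f : A -> C) (g : B -> C) :
  is_hom f -> is_hom g -> is_hom (sum_map f g).
Proof. by move=> hf hg s [a|b] /=. Qed.

Lemma sum_map_inj A B (C : sact S) (f : A -> C) (g : B -> C) :
  injective f -> injective g -> (forall a b, f a <> g b) ->
  injective (sum_map f g).
Proof.
move=> inj_f inj_g fg [a|b] [a'|b'] //= e.
- by rewrite (inj_f _ _ e).
- by case: (fg _ _ e).
- by case: (fg _ _ (esym e)).
- by rewrite (inj_g _ _ e).
Qed.

Lemma point_map_hom A (e : A) : fixedp e -> is_hom (fun _ : one_act S => e).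
Proof. by move=> fe s _; rewrite fe. Qed.

Lemma point_map_inj A (e : A) : injective (fun _ : one_act S => e).
Proof. by do 2 case. Qed.

Lemma sum_one_fixed_point_unique B :
  (forall b : B, ~ fixedp b) -> fixed_point_unique (sum_act B (one_act S)).
Proof.
move=> nofix [x|[]] [y|[]] //.
- by move=> /sum_fixed_inl /nofix.
- by move=> /sum_fixed_inl /nofix.
- by move=> _ /sum_fixed_inl /nofix.
Qed.

Definition coset_elt (K : (S -> Prop) -> Prop) H (kH : K H) C
    (pC : exists t, C = lcoset H t) : cosets_coprod K :=
  existT (fun i : {H | K H} => coset_act (proj1_sig i))
    (exist _ H kH) (exist _ C pC).

Lemma coset_eltE (K : (S -> Prop) -> Prop) H H' (kH : K H) (kH' : K H')
    C C' pC pC' :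
  H = H' -> C = C' -> coset_elt kH (C := C) pC = coset_elt kH' (C := C') pC'.
Proof.
move=> eH eC; subst H' C'.
by rewrite (proof_irrelevance _ kH kH') (proof_irrelevance _ pC pC').
Qed.

Lemma cosets_coprod_inhabited (K : (S -> Prop) -> Prop) H :
  K H -> inhabited (cosets_coprod K).
Proof.
by move=> kH; constructor; apply: (coset_elt kH (C := lcoset H mone)); exists mone.
Qed.

Lemma lcoset_refl (H : S -> Prop) t : H mone -> lcoset H t t.
Proof. by move=> H1; exists mone; rewrite mmulr1. Qed.

Hypotheses (HG : is_group S) (HC : is_commutative S).

Lemma mmul_cancel t x y : mmul t x = mmul t y -> x = y.
Proof.
have [t' [_ t't]] := HG t.
by move=> e; rewrite -(mmul1 x) -(mmul1 y) -t't -!mmulA e.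
Qed.

Lemma act_inj A t : injective (aop A t).
Proof.
have [t' [_ t't]] := HG t.
by move=> a b e; rewrite -(aop1 a) -(aop1 b) -t't !aopM e.
Qed.

Lemma stab_act A t (b : A) : stab (aop A t b) = stab b.
Proof.
apply: functional_extensionality => s; apply: propositional_extensionality.
rewrite /stab -aopM HC aopM; split=> [/act_inj // | -> //].
Qed.

Lemma fixedp_act A t (b : A) : fixedp (aop A t b) <-> fixedp b.
Proof.
by rewrite -[fixedp _]/(forall s, stab (aop A t b) s) stab_act.
Qed.

Lemma stab_subgroup A (b : A) : is_subgroup (stab b).
Proof.
split=> [|x y hx hy | x y hx e]; first exact: aop1.
  by rewrite /stab aopM hy hx.
by rewrite /stab -{1}hx -aopM HC e aop1.
Qed.

Lemma lcoset_stabP A (b : A) t t' :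
  lcoset (stab b) t = lcoset (stab b) t' <-> aop A t b = aop A t' b.
Proof.
split=> [e | e].
  have : lcoset (stab b) t t' by rewrite e; apply: lcoset_refl; apply: aop1.
  by move=> [h [hb ->]]; rewrite aopM hb.
have incl u v : aop A u b = aop A v b ->
    forall w, lcoset (stab b) u w -> lcoset (stab b) v w.
  move=> euv _ [h [hb ->]]; have [v' [vv' v'v]] := HG v.
  exists (mmul v' (mmul u h)); split; last by rewrite mmulA vv' mmul1.
  by rewrite /stab !aopM hb euv -aopM v'v aop1.
apply: functional_extensionality => w; apply: propositional_extensionality.
by split; apply: incl.
Qed.

Lemma orbit_refl A (b : A) : orbit b b.
Proof. by exists mone; apply: aop1. Qed.

Lemma orbit_act A s (b : A) : orbit (aop A s b) = orbit b.
Proof.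
apply: functional_extensionality => c; apply: propositional_extensionality.
split=> [[t e] | [t e]]; last by exists (mmul s t); rewrite aopM e.
have [s' [_ s's]] := HG s; exists (mmul s' t).
by rewrite aopM e -aopM s's aop1.
Qed.

Lemma cosets_coprod_nofix (K : (S -> Prop) -> Prop) :
  subset_proper K -> forall x : cosets_coprod K, ~ fixedp x.
Proof.
move=> HK [[H kH] [C [t eC]]] /coprod_fixedP fc.
have [[H1 _ _] [s Hs]] := HK H kH; apply: Hs.
have := congr1 (@proj1_sig _ _) (fc s); rewrite /= eC pred_act_lcoset => e.
have : lcoset H t (mmul s t) by rewrite -e; apply: lcoset_refl.
by move=> [h [Hh]]; rewrite HC => /mmul_cancel ->.
Qed.

Definition nonfixed_stabs A : (S -> Prop) -> Prop :=
  fun H => exists a : A, H = stab a /\ ~ fixedp a.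

Definition coset_model A := cosets_coprod (nonfixed_stabs A).

Lemma nonfixed_stabs_proper A : subset_proper (nonfixed_stabs A).
Proof.
move=> _ [a [-> nfa]]; split; first exact: stab_subgroup.
exact: not_all_ex_not nfa.
Qed.

Lemma coset_model_nofix A (x : coset_model A) : ~ fixedp x.
Proof. exact/cosets_coprod_nofix/nonfixed_stabs_proper. Qed.

Section CosetModelEmbedding.
Variable A : sact S.

Definition stab_witness (i : {H | nonfixed_stabs A H}) : A :=
  proj1_sig (constructive_indefinite_description _ (proj2_sig i)).

Lemma stab_witnessP i :
  proj1_sig i = stab (stab_witness i) /\ ~ fixedp (stab_witness i).
Proof. by rewrite /stab_witness; case: constructive_indefinite_description. Qed.

Definition coset_rep (H : S -> Prop) (c : coset_car H) : S :=
  proj1_sig (constructive_indefinite_description _ (proj2_sig c)).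

Lemma coset_repP (H : S -> Prop) (c : coset_car H) :
  proj1_sig c = lcoset H (coset_rep c).
Proof. by rewrite /coset_rep; case: constructive_indefinite_description. Qed.

Definition coset_model_emb (x : coset_model A) : A :=
  aop A (coset_rep (projT2 x)) (stab_witness (projT1 x)).

Lemma coset_model_emb_hom : is_hom coset_model_emb.
Proof.
move=> s [i c]; rewrite /coset_model_emb /= -aopM -lcoset_stabP.
case: (stab_witnessP i) => <- _.
by rewrite -!coset_repP /= coset_repP pred_act_lcoset.
Qed.

Lemma coset_model_emb_inj : injective coset_model_emb.
Proof.
move=> [i c] [j d]; rewrite /coset_model_emb /= => e.
have [ei _] := stab_witnessP i; have [ej _] := stab_witnessP j.
have eij : i = j.
  apply: eq_sig_hprop => [? ? ?|]; first exact: proof_irrelevance.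
  by rewrite ei ej -(stab_act (coset_rep c)) e stab_act.
subst j; congr existT; apply: eq_sig_hprop => [? ? ?|]; first exact: proof_irrelevance.
rewrite !coset_repP; move: (coset_rep c) (coset_rep d) e => t t' e.
by rewrite ei lcoset_stabP.
Qed.

Lemma coset_model_emb_nofix x : ~ fixedp (coset_model_emb x).
Proof. by rewrite /coset_model_emb fixedp_act; case: (stab_witnessP (projT1 x)). Qed.

End CosetModelEmbedding.

Section Transversal.
Variables (A : sact S) (rho : A -> A).
Hypothesis rho_orbit : forall b, orbit b (rho b).

Definition orbit_coset (b : A) : S -> Prop := fun u => aop A u (rho b) = b.

Lemma orbit_coset_lcoset b : exists t, orbit_coset b = lcoset (stab (rho b)) t.
Proof.
have [t et] := rho_orbit b; exists t.
apply: functional_extensionality => u; apply: propositional_extensionality.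
split=> [eu | [h [hh ->]]]; last by rewrite /orbit_coset aopM hh.
have <- : lcoset (stab (rho b)) u = lcoset (stab (rho b)) t.
  by apply/lcoset_stabP; rewrite eu.
exact/lcoset_refl/aop1.
Qed.

Lemma nonfixed_stabs_rho b : ~ fixedp b -> nonfixed_stabs A (stab (rho b)).
Proof.
move=> nfb; exists (rho b); split=> //; have [t et] := rho_orbit b.
by move: nfb; rewrite -{1}et fixedp_act.
Qed.

Definition to_coset_model b (nfb : ~ fixedp b) : coset_model A :=
  coset_elt (nonfixed_stabs_rho nfb) (orbit_coset_lcoset b).

(* [mone] lies in the coset attached to [b] iff [rho b = b]. *)
Lemma to_coset_model_sep a a' nfa nfa' : rho a = a -> rho a' <> a' ->
  to_coset_model (b := a) nfa <> to_coset_model (b := a') nfa'.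
Proof.
move=> ra ra' e; apply: ra'.
have := congr1 (fun z : coset_model A => proj1_sig (projT2 z) mone) e.
by rewrite /= /orbit_coset ra !aop1 => <-.
Qed.

Hypothesis rho_act : forall s b, rho (aop A s b) = rho b.

Lemma to_coset_model_act s b nfb nfsb :
  to_coset_model (b := aop A s b) nfsb
  = aop (coset_model A) s (to_coset_model (b := b) nfb).
Proof.
apply: coset_eltE; first by rewrite rho_act.
apply: functional_extensionality => u; apply: propositional_extensionality.
rewrite /pred_act /= /orbit_coset rho_act; split=> [eu | [v [ev ->]]].
  have [s' [ss' s's]] := HG s; exists (mmul s' u); split.
    by rewrite aopM eu -aopM s's aop1.
  by rewrite mmulA ss' mmul1.
by rewrite aopM ev.
Qed.

Variables (B : sact S) (i : coset_model A -> B) (phi : A -> B).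

Definition glue (b : A) : B :=
  if excluded_middle_informative (fixedp b) is right nfb
  then i (to_coset_model nfb) else phi b.

Hypotheses (i_hom : is_hom i) (i_inj : injective i).
Hypothesis phi_fixed : forall b, fixedp b -> fixedp (phi b).

Lemma glue_hom : is_hom glue.
Proof.
move=> s b; rewrite /glue.
case: excluded_middle_informative => [fsb|nfsb];
  case: excluded_middle_informative => [fb|nfb].
- by rewrite fb phi_fixed.
- by case: nfb; rewrite -(fixedp_act s).
- by case: nfsb; rewrite fixedp_act.
- by rewrite (to_coset_model_act nfb) i_hom.
Qed.

Lemma glue_fixedP b : fixedp (glue b) <-> fixedp b.
Proof.
rewrite /glue; case: excluded_middle_informative => [fb | nfb].
  by split=> // _; apply: phi_fixed.
rewrite injective_hom_fixedP //; split=> // fx.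
by case: (coset_model_nofix fx).
Qed.

End Transversal.

(* [rho] fixes [a], and moves [a'] unless it is fixed: if [a'] lies in the
   orbit of [a] it is sent to [a], otherwise to [s0 a'] for some [s0] moving it. *)
Lemma separating_transversal A (a a' : A) :
  exists rho : A -> A, [/\ forall b, orbit b (rho b),
    forall s b, rho (aop A s b) = rho b, rho a = a &
    a <> a' -> ~ fixedp a' -> rho a' <> a'].
Proof.
have [s0 hs0] : exists s0, ~ fixedp a' -> aop A s0 a' <> a'.
  case: (classic (fixedp a')) => [fa' | /not_all_ex_not [s0 hs0]].
    by exists mone.
  by exists s0.
exists (fun b => if excluded_middle_informative (orbit b a) is left _ then a
  else if excluded_middle_informative (orbit b a') is left _ then aop A s0 a'
  else epsilon (inhabits a) (orbit b)); split.
- move=> b /=; case: excluded_middle_informative => [//|_].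
  case: excluded_middle_informative => [[t et] | _].
    have [s0' [_ s0's0]] := HG s0; exists (mmul t s0').
    by rewrite -aopM -mmulA s0's0 mmulr1.
  by apply: epsilon_spec; exists b; apply: orbit_refl.
- by move=> s b; rewrite !orbit_act.
- by case: excluded_middle_informative => // -[]; apply: orbit_refl.
- move=> ne /hs0 hs; case: excluded_middle_informative => [_|_].
    by move=> e; apply: ne.
  by case: excluded_middle_informative => // -[]; apply: orbit_refl.
Qed.

Lemma separates_via_coset_model A B (i : coset_model A -> B) :
  is_hom i -> injective i ->
  (forall a a' : A, a <> a' -> exists phi : A -> B,
     (forall b, fixedp b -> fixedp (phi b)) /\
     (fixedp a -> fixedp a' -> phi a <> phi a')) ->
  separates A B.
Proof.
move=> i_hom i_inj sep_fixed a a' ne.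
have [phi [phi_fixed phi_sep]] := sep_fixed _ _ ne.
have [rho [rho_orbit rho_act ra ra']] := separating_transversal a a'.
exists (glue rho_orbit i phi); split; first exact: glue_hom.
have fixedP := glue_fixedP rho_orbit i_hom i_inj phi_fixed.
case: (classic (fixedp a)) => fa; case: (classic (fixedp a')) => fa'.
- by rewrite /glue; do 2 case: excluded_middle_informative => // ?; apply: phi_sep.
- by move=> e; apply: fa'; rewrite -fixedP -e fixedP.
- by move=> e; apply: fa; rewrite -fixedP e fixedP.
- rewrite /glue; do 2 case: excluded_middle_informative => // ?.
  by move=> /i_inj; apply: to_coset_model_sep => //; apply: ra'.
Qed.

Lemma geom_equiv_type1 A :
  (forall b : A, ~ fixedp b) -> geom_equiv A (coset_model A).
Proof.
move=> nofix; apply: separates_geom_equiv; last first.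
  exact/injective_hom_separates/coset_model_emb_inj/coset_model_emb_hom.
apply: (separates_via_coset_model (i := id)) => // a a' _.
have [x0] : inhabited (coset_model A).
  by apply: (@cosets_coprod_inhabited _ (stab a)); exists a.
by exists (fun _ => x0); split=> [b /nofix | /nofix].
Qed.

Lemma geom_equiv_type2 A (e : A) :
  fixedp e -> (forall b : A, fixedp b -> b = e) ->
  geom_equiv A (sum_act (coset_model A) (one_act S)).
Proof.
move=> fe uniq_e; apply: separates_geom_equiv.
  apply: (separates_via_coset_model (B := sum_act _ _) (i := inl))
    => [// | x y [] // | a a' ne].
  exists (fun _ => inr tt); split=> // fa fa'.
  by case: ne; rewrite (uniq_e _ fa) (uniq_e _ fa').
apply: (injective_hom_separates (f := sum_map (@coset_model_emb A) (fun _ => e))).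
  exact/sum_map_hom/point_map_hom/fe/coset_model_emb_hom.
apply: sum_map_inj; [exact: coset_model_emb_inj | exact: point_map_inj |].
by move=> x _ ex; apply: (@coset_model_emb_nofix _ x); rewrite ex.
Qed.

Lemma geom_equiv_type3 A (e1 e2 : A) :
  fixedp e1 -> fixedp e2 -> e1 <> e2 ->
  geom_equiv A (sum_act (coset_model A) (sum_act (one_act S) (one_act S))).
Proof.
move=> fe1 fe2 ne12; apply: separates_geom_equiv.
  apply: (separates_via_coset_model (B := sum_act _ _) (i := inl))
    => [// | x y [] // | a a' ne].
  exists (fun b =>
    inr (if excluded_middle_informative (b = a) then inl tt else inr tt)).
  split=> [b _ s | _ _]; first by case: excluded_middle_informative.
  by do 2 case: excluded_middle_informative => // ?; subst.
pose e12 := sum_map (fun _ : one_act S => e1) (fun _ : one_act S => e2).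
apply: (injective_hom_separates (f := sum_map (@coset_model_emb A) e12)).
  apply/sum_map_hom/sum_map_hom/point_map_hom/fe2/point_map_hom/fe1.
  exact: coset_model_emb_hom.
apply: sum_map_inj; [exact: coset_model_emb_inj | |].
  by apply: sum_map_inj; [exact: point_map_inj | exact: point_map_inj | move=> _ _].
move=> x y; apply: contra_not (@coset_model_emb_nofix _ x) => ->.
by case: y => -[]; [apply: fe1 | apply: fe2].
Qed.

Lemma rep_type1_trivializes_nontrivially A : rep_type1 A ->
  exists s, fixed_point_trivializes A s /\ ~ acts_trivially A s.
Proof.
move=> [K [HK [H kH] eA]]; have [x] := cosets_coprod_inhabited kH.
have [s hs] := not_all_ex_not _ _ (@cosets_coprod_nofix K HK x); exists s; split.
  by apply/(geom_equiv_fixed_point_trivializes s eA) => -[y /(cosets_coprod_nofix HK)].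
by move/(geom_equiv_acts_trivially s eA)/(_ x).
Qed.

Lemma rep_type2_trivializes_acts_trivially A : rep_type2 A ->
  forall s, fixed_point_trivializes A s -> acts_trivially A s.
Proof.
move=> [K [_ eA]] s /(geom_equiv_fixed_point_trivializes s eA) triv.
by apply/(geom_equiv_acts_trivially s eA)/triv; exists (inr tt).
Qed.

Lemma rep_type12_fixed_point_unique A :
  rep_type1 A \/ rep_type2 A -> fixed_point_unique A.
Proof.
case=> [[K [HK _ eA]] | [K [HK eA]]]; apply/(geom_equiv_fixed_point_unique eA).
  by move=> y y' /(cosets_coprod_nofix HK).
exact/sum_one_fixed_point_unique/cosets_coprod_nofix.
Qed.

Lemma rep_type3_not_fixed_point_unique A : rep_type3 A -> ~ fixed_point_unique A.
Proof.
move=> [K [_ eA]] /(geom_equiv_fixed_point_unique eA) uniq.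
by have := uniq (inr (inl tt)) (inr (inr tt)) (fun _ => erefl) (fun _ => erefl).
Qed.

Lemma rep_types_exclusive A :
  ~ (rep_type1 A /\ rep_type2 A) /\ ~ (rep_type1 A /\ rep_type3 A) /\
  ~ (rep_type2 A /\ rep_type3 A).
Proof.
split; [|split] => -[r r'].
- have [s [triv ntriv]] := rep_type1_trivializes_nontrivially r.
  exact/ntriv/(rep_type2_trivializes_acts_trivially r').
- exact/(rep_type3_not_fixed_point_unique r')/rep_type12_fixed_point_unique/or_introl.
- exact/(rep_type3_not_fixed_point_unique r')/rep_type12_fixed_point_unique/or_intror.
Qed.

End SActs.

Theorem theorem3p22 (S : monoid) (HG : is_group S) (HC : is_commutative S)
  (A : sact S) (HA : nonempty_act A) :
  (rep_type1 A \/ rep_type2 A \/ rep_type3 A) /\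
  ~ (rep_type1 A /\ rep_type2 A) /\
  ~ (rep_type1 A /\ rep_type3 A) /\
  ~ (rep_type2 A /\ rep_type3 A).
Proof.
split; last exact: rep_types_exclusive.
have proper := @nonfixed_stabs_proper S HC A.
case: (classic (exists e : A, fixedp e)) => [[e fe] | nofix].
  case: (classic (exists e', fixedp e' /\ e' <> e)) => [[e' [fe' ne]] | uniq].
    right; right; exists (nonfixed_stabs A); split=> //.
    exact: geom_equiv_type3 fe' fe ne.
  right; left; exists (nonfixed_stabs A); split=> //.
  apply: (geom_equiv_type2 HG HC fe) => b fb; apply: NNPP => ne.
  by apply: uniq; exists b.
have nofix' : forall b : A, ~ fixedp b by move=> b fb; apply: nofix; exists b.
left; exists (nonfixed_stabs A); split; [done | | exact: geom_equiv_type1].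
by case: HA => a; exists (stab a), a.
Qed.
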